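(* Let $\Omega\subseteq\mathbb{R}^d$ be a nonempty open convex set and let $F:\Omega\to\mathbb{R}$ be a function of Legendre type, with Bregman divergence $D_F$. Then for every $q\in\Omega$ and every $r\ge 0$, both the primal Bregman ball $B_F(q;r)=\{y\in\Omega: D_F(q\|y)\le r\}$ and the dual Bregman ball $B'_F(q;r)=\{y\in\Omega: D_F(y\|q)\le r\}$ are connected subsets of $\mathbb{R}^d$.
   Context: A function $F:\Omega\to\mathbb{R}$ on a nonempty open convex set $\Omega\subseteq\mathbb{R}^d$ is of Legendre type if (I) it is differentiable, (II) it is strictly convex, and (III) if the boundary $\partial\Omega$ is nonempty, then $\|\nabla F(x)\|\to\infty$ as $x\to\partial\Omega$. The Bregman divergence generated by $F$ is $D_F:\Omega\times\Omega\to\mathbb{R}$, $D_F(x\|y)=F(x)-F(y)-\langle\nabla F(y),x-y\rangle$. *)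

From HB Require Import structures.
From mathcomp Require Import all_boot all_order all_algebra.
From mathcomp Require Import all_classical all_reals all_analysis.
Set Implicit Arguments. Unset Strict Implicit. Unset Printing Implicit Defensive.
Import Order.TTheory GRing.Theory Num.Theory.
Import numFieldNormedType.Exports.
Local Open Scope classical_set_scope.
Local Open Scope ring_scope.

Definition dotv (R : realType) (d : nat) (u v : 'rV[R]_d) : R :=
  \sum_(i < d) u 0 i * v 0 i.

Definition grad (R : realType) (d : nat) (F : 'rV[R]_d -> R) (x : 'rV[R]_d)
  : 'rV[R]_d := \row_(i < d) ('d F x (delta_mx 0 i : 'rV[R]_d)).

(* F : Omega -> R (values of F outside Omega are irrelevant) is of Legendre type *)
Definition legendre_type (R : realType) (d : nat) (Omega : set 'rV[R]_d)
  (F : 'rV[R]_d -> R) : Prop :=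
  (forall x, Omega x -> differentiable F x) /\
  (forall x y (t : R), Omega x -> Omega y -> x != y -> 0 < t < 1 ->
     F (t *: x + (1 - t) *: y) < t * F x + (1 - t) * F y) /\
  (forall b, closure Omega b -> ~ Omega b ->
     forall M : R, \forall x \near b, Omega x -> M < `|grad F x|).

Definition bregman (R : realType) (d : nat) (F : 'rV[R]_d -> R) (x y : 'rV[R]_d) : R :=
  F x - F y - dotv (grad F y) (x - y).

Definition primal_ball (R : realType) (d : nat) (Omega : set 'rV[R]_d)
  (F : 'rV[R]_d -> R) (q : 'rV[R]_d) (r : R) : set 'rV[R]_d :=
  [set y | Omega y /\ bregman F q y <= r].

Definition dual_ball (R : realType) (d : nat) (Omega : set 'rV[R]_d)
  (F : 'rV[R]_d -> R) (q : 'rV[R]_d) (r : R) : set 'rV[R]_d :=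
  [set y | Omega y /\ bregman F y q <= r].

(** Both balls are star-shaped around their centre [q], hence connected.
    For the dual ball, [y |-> D_F(y || q)] is convex and vanishes at [q], so
    it grows at most linearly along each segment from [q].  For the primal
    ball, along the ray [b = q + l (a - q)] one has
    [D_F(q || b) = F q - F b + l <grad F b, a - q>]; convexity gives
    [F a - F b <= (1 - l) <grad F a, a - q>] and monotonicity of the gradient
    gives [<grad F b, a - q> <= <grad F a, a - q>], so [D_F(q || b)] is
    nondecreasing in [l].  Only (weak) convexity and differentiability of [F]
    are used. *)
From HB Require Import structures.
From mathcomp Require Import all_boot all_order all_algebra.
From mathcomp Require Import all_classical all_reals all_analysis.
From mathcomp Require Import lra.
Import Order.TTheory GRing.Theory Num.Theory.
Import numFieldNormedType.Exports.
Local Open Scope classical_set_scope.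
Local Open Scope ring_scope.

Lemma strictly_convex_convex_function {R : realFieldType} {V : lmodType R}
    {D : set V} {f : V -> R} :
  (forall x y (t : R), D x -> D y -> x != y -> 0 < t < 1 ->
     f (t *: x + (1 - t) *: y) < t * f x + (1 - t) * f y) ->
  convex_function D f.
Proof.
move=> sc t x y /set_mem Dx /set_mem Dy.
suff cvx_s : forall s : R, 0 <= s <= 1 ->
    f (s *: x + (1 - s) *: y) <= s * f x + (1 - s) * f y.
  by apply: cvx_s; rewrite ge0 le1.
move=> s /andP[s0 s1].
have [->|sn0] := eqVneq s 0.
  by rewrite scale0r add0r subr0 scale1r mul0r add0r mul1r.
have [->|sn1] := eqVneq s 1.
  by rewrite subrr scale0r addr0 scale1r mul0r addr0 mul1r.
have [<-|xy] := eqVneq x y.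
  by rewrite -scalerDl -mulrDl addrC subrK scale1r mul1r.
by apply/ltW/sc; rewrite // !lt_neqAle eq_sym sn0 sn1 s0 s1.
Qed.

Lemma convex_set_ray {R : realFieldType} {V : lmodType R} {A : set V} {q a : V}
    {l : R} :
  convex_set A -> A q -> A a -> 0 <= l <= 1 -> A (q + l *: (a - q)).
Proof.
move=> cA Aq Aa /andP[l0 l1].
have -> : q + l *: (a - q) = l *: a + (1 - l) *: q.
  by rewrite scalerBr scalerBl scale1r addrCA addrA.
exact/set_mem/(cA a q (Itv01 l0 l1) (mem_set Aa) (mem_set Aq)).
Qed.

Lemma convex_functionP {R : realFieldType} {V : lmodType R} {D : set V}
    {f : V -> R} {x y : V} {t : R} :
  convex_function D f -> D x -> D y -> 0 <= t <= 1 ->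
  f (t *: x + (1 - t) *: y) <= t * f x + (1 - t) * f y.
Proof.
by move=> cf Dx Dy /andP[t0 t1]; exact: cf (Itv01 t0 t1) x y (mem_set Dx) (mem_set Dy).
Qed.

Lemma star_shaped_connected {R : realType} {V : normedModType R} {A : set V}
    (q : V) :
  A q -> (forall a l, A a -> 0 <= l <= 1 -> A (q + l *: (a - q))) ->
  connected A.
Proof.
move=> Aq starA.
pose seg a := (fun t : R => q + t *: (a - q)) @` `[0, 1].
have -> : A = \bigcup_(a in A) seg a.
  apply/seteqP; split=> [a Aa|x [a Aa [t /= t01 <-]]]; last first.
    by apply: starA; rewrite // -in_itv.
  exists a => //; exists 1; first by rewrite /= in_itv /= lexx ler01.
  by rewrite scale1r addrC subrK.
apply: bigcup_connected.
  exists q => a _; exists 0; first by rewrite /= in_itv /= lexx ler01.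
  by rewrite scale0r addr0.
move=> a _; apply: connected_continuous_connected; first exact: segment_connected.
apply: continuous_subspaceT => t.
by apply: cvgD; [exact: cvg_cst | apply: cvgZr_tmp; exact: cvg_id].
Qed.

Lemma diff_scaler {R : realType} {V : normedModType R} (F : V -> R) x k v :
  'd F x (k *: v) = k * 'd F x v.
Proof. exact: linearZ. Qed.

Section ConvexDifferential.
Context {R : realType} {V : normedModType R} {D : set V} {F : V -> R}.
Hypothesis cvxF : convex_function D F.

Lemma convex_diff_le {x y} :
  D x -> D y -> differentiable F x -> 'd F x (y - x) <= F y - F x.
Proof.
move=> Dx Dy dFx; rewrite -deriveE //.
have dF : derivable F x (y - x) by exact: diff_derivable.
have /cvgr_to_le := cvg_dnbhs_at_right dF; apply.
near=> h.
have h0 : 0 < h by near: h; exact: nbhs_right_gt.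
have h1 : h < 1 by near: h; exact: nbhs_right_lt.
have /(convex_functionP cvxF Dy Dx) : 0 <= h <= 1 by rewrite !ltW.
rewrite /= /shift /=.
have -> : h *: (y - x) + x = h *: y + (1 - h) *: x.
  by rewrite scalerBr scalerBl scale1r addrA addrAC.
by rewrite ler_pdivrMl // => ?; lra.
Unshelve. all: by end_near. Qed.

Lemma convex_diff_monotone {x y} :
  D x -> D y -> differentiable F x -> differentiable F y ->
  'd F x (y - x) <= 'd F y (y - x).
Proof.
move=> Dx Dy dFx dFy.
have := convex_diff_le Dx Dy dFx; have := convex_diff_le Dy Dx dFy.
by rewrite -opprB linearN /=; lra.
Qed.

Lemma convex_diff_monotone_ray {x u t} :
  D x -> D (x + t *: u) -> 0 < t ->
  differentiable F x -> differentiable F (x + t *: u) ->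
  'd F x u <= 'd F (x + t *: u) u.
Proof.
move=> Dx Dy t0 dFx dFy.
have := convex_diff_monotone Dx Dy dFx dFy.
by rewrite addrAC subrr add0r (diff_scaler F x) (diff_scaler F (x + t *: u)) ler_pM2l.
Qed.

Definition diff_bregman (F : V -> R) (x y : V) : R := F x - F y - 'd F y (x - y).

Lemma diff_bregmanxx x : diff_bregman F x x = 0.
Proof. by rewrite /diff_bregman !subrr linear0 subr0. Qed.

Lemma diff_bregman_dual_ray_le {q a l} :
  D q -> D a -> 0 <= l <= 1 ->
  diff_bregman F (q + l *: (a - q)) q <= l * diff_bregman F a q.
Proof.
move=> Dq Da l01; rewrite /diff_bregman [q + _ - q]addrC addKr diff_scaler.
have := convex_functionP cvxF Da Dq l01.
have -> : l *: a + (1 - l) *: q = q + l *: (a - q).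
  by rewrite scalerBr scalerBl scale1r addrCA addrA.
by lra.
Qed.

Hypothesis cvxD : convex_set D.

Lemma diff_bregman_dual_ball_connected q r :
  D q -> 0 <= r -> connected [set y | D y /\ diff_bregman F y q <= r].
Proof.
move=> Dq r0; apply: (star_shaped_connected q) => [|a l [Da Dr] l01].
  by split; rewrite // diff_bregmanxx.
split; first exact: convex_set_ray.
apply: le_trans (diff_bregman_dual_ray_le Dq Da l01) _.
case/andP: l01 => l0 l1; apply: le_trans (ler_wpM2l l0 Dr) _.
by rewrite ler_piMl.
Qed.

Hypothesis difF : forall x, D x -> differentiable F x.

Lemma diff_bregman_primal_ray_le {q a l} :
  D q -> D a -> 0 <= l <= 1 ->
  diff_bregman F q (q + l *: (a - q)) <= diff_bregman F q a.
Proof.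
move=> Dq Da l01; have Db := convex_set_ray cvxD Dq Da l01.
have [->|l_neq1] := eqVneq l 1; first by rewrite scale1r addrC subrK.
have l_lt1 : 0 < 1 - l.
  by move: l01 => /andP[_]; rewrite subr_gt0 lt_neqAle l_neq1.
set b := q + l *: (a - q) in Db *.
have eab : b + (1 - l) *: (a - q) = a.
  by rewrite /b -addrA -scalerDl addrCA subrr addr0 scale1r addrC subrK.
have := @convex_diff_monotone_ray b (a - q) (1 - l); rewrite eab.
move=> /(_ Db Da l_lt1 (difF _ Db) (difF _ Da)) mono.
have eba : b - a = - ((1 - l) *: (a - q)).
  by rewrite -[in LHS]eab opprD addNKr.
have := convex_diff_le Da Db (difF _ Da).
rewrite eba linearN diff_scaler => cvx.
have eqb : q - b = - (l *: (a - q)) by rewrite /b opprD addNKr.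
rewrite /diff_bregman eqb -opprB !linearN diff_scaler.
have : l * 'd F b (a - q) <= l * 'd F a (a - q).
  by rewrite ler_wpM2l //; case/andP: l01.
by lra.
Qed.

Lemma diff_bregman_primal_ball_connected q r :
  D q -> 0 <= r -> connected [set y | D y /\ diff_bregman F q y <= r].
Proof.
move=> Dq r0; apply: (star_shaped_connected q) => [|a l [Da Dr] l01].
  by split; rewrite // diff_bregmanxx.
split; first exact: convex_set_ray.
exact: le_trans (diff_bregman_primal_ray_le Dq Da l01) Dr.
Qed.

End ConvexDifferential.

Lemma bregman_diff (R : realType) (d : nat) (F : 'rV[R]_d -> R) :
  bregman F = diff_bregman F.
Proof.
apply/funext => x; apply/funext => y; rewrite /bregman /diff_bregman.
congr (_ - _); rewrite /dotv /grad {2}(row_sum_delta (x - y)) linear_sum.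
by apply: eq_bigr => i _; rewrite mxE linearZ /= mulrC.
Qed.

Theorem lemma2 (R : realType) (d : nat) (Omega : set 'rV[R]_d)
  (F : 'rV[R]_d -> R) :
  Omega !=set0 -> open Omega -> convex_set Omega -> legendre_type Omega F ->
  forall (q : 'rV[R]_d) (r : R), Omega q -> 0 <= r ->
    connected (primal_ball Omega F q r) /\ connected (dual_ball Omega F q r).
Proof.
move=> _ _ cvxO [difF [strictF _]] q r Oq r0.
have cvxF := strictly_convex_convex_function strictF.
rewrite /primal_ball /dual_ball bregman_diff; split.
- exact: diff_bregman_primal_ball_connected.
- exact: diff_bregman_dual_ball_connected.
Qed.
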